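(* Let $X=\nu_{d_1,\dots,d_k}(\mathbb{P}^{n_1}\times\cdots\times\mathbb{P}^{n_k})\subset\mathbb{P}^N$ be the Segre-Veronese variety and $p\in\mathbb{P}^N$. Suppose there exists a curvilinear zero-dimensional scheme $Z\subset\mathbb{P}^{n_1}\times\cdots\times\mathbb{P}^{n_k}$ of degree $c$ with $\alpha$ connected components $Z_1,\dots,Z_\alpha$ such that $p\in\langle\nu_{d_1,\dots,d_k}(Z)\rangle$ and each $\nu_{d_1,\dots,d_k}(Z_j)$ is linearly independent (i.e. $\dim\langle\nu_{d_1,\dots,d_k}(Z_j)\rangle=\deg(Z_j)-1$). Then $$r_X(p)\le 2\alpha+c\Big(-1+\sum_{i=1}^k d_i\Big).$$
   Context: Work over an algebraically closed field. $\nu_{d_1,\dots,d_k}:\mathbb{P}^{n_1}\times\cdots\times\mathbb{P}^{n_k}\to\mathbb{P}^N$, $N=\prod_i\binom{d_i+n_i}{n_i}-1$, is the Segre-Veronese embedding by $|\mathcal{O}(d_1,\dots,d_k)|$ and $X$ its image. A zero-dimensional scheme is curvilinear if each of its connected components has Zariski tangent space of dimension $\le 1$. $\langle Y\rangle$ is the linear span. The $X$-rank $r_X(p)$ is the minimal $s$ such that $p$ lies in the span of $s$ points of $X$. *)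

From HB Require Import structures.
From mathcomp Require Import all_boot all_order all_algebra.
Set Implicit Arguments. Unset Strict Implicit. Unset Printing Implicit Defensive.
Import Order.TTheory GRing.Theory Num.Theory.
Local Open Scope ring_scope.

Section SV.
Variable F : fieldType.
Variables (k : nat) (n d : 'I_k -> nat).

(* Degree-(d i) monomials in the n i + 1 homogeneous coordinates of P^{n i},
   encoded as nondecreasing (d i)-tuples of variable indices (a multiset). *)
Definition Mon (i : 'I_k) : Type :=
  {t : (d i).-tuple 'I_(n i).+1 | sorted leq [seq val x | x <- t]}.

(* Coordinates of the ambient P^N of the Segre-Veronese embedding:
   multihomogeneous monomials of multidegree (d_1,...,d_k). *)
Definition SVidx : Type := {dffun forall i : 'I_k, Mon i}.

(* Affine-cone representative of a point of P^{n_1} x ... x P^{n_k}. *)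
Definition ppoint : Type := forall i : 'I_k, 'I_(n i).+1 -> F.

Definition ppoint_ok (x : ppoint) : Prop := forall i, exists t, x i t != 0.

Definition sv (x : ppoint) : SVidx -> F :=
  fun a => \prod_(i < k) \prod_(t <- val (a i)) x i t.

Definition in_span (s : nat) (v : nat -> SVidx -> F) (p : SVidx -> F) : Prop :=
  exists c : nat -> F, forall a, p a = \sum_(l < s) c l * v l a.

Definition lin_indep (s : nat) (v : nat -> SVidx -> F) : Prop :=
  forall c : nat -> F, (forall a, \sum_(l < s) c l * v l a = 0) ->
    forall l, (l < s)%N -> c l = 0.

Definition Xrank_le (p : SVidx -> F) (r : nat) : Prop :=
  exists s : nat, (s <= r)%N /\
    exists x : nat -> ppoint,
      (forall l, (l < s)%N -> ppoint_ok (x l)) /\ in_span s (fun l => sv (x l)) p.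

(* A polynomial germ of a curve in the affine cones:
   gamma i t = t-th homogeneous coordinate in the i-th factor, as a polynomial
   in the parameter u.  A connected curvilinear scheme of degree m is the image
   of Spec F[u]/(u^m) under such a germ, embedded when m >= 2. *)
Definition germ : Type := forall i : 'I_k, 'I_(n i).+1 -> {poly F}.

Definition germ_pt (g : germ) : ppoint := fun (i : 'I_k) t => (g i t)`_0.
Arguments germ_pt g i t : clear implicits.

Definition proportional (i : 'I_k) (x y : 'I_(n i).+1 -> F) : Prop :=
  exists c : F, forall t, x t = c * y t.

(* g mod u^m defines a closed embedding of Spec F[u]/(u^m): support point is a
   point of the product, and (if m >= 2) the tangent vector is nonzero, i.e.
   in some factor the first-order term is not proportional to the base point. *)
Definition curvilinear_component (m : nat) (g : germ) : Prop :=
  [/\ (0 < m)%N, ppoint_ok (germ_pt g) &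
      (1 < m)%N -> exists i, ~ @proportional i (fun t => (g i t)`_1) (fun t => (g i t)`_0)].

(* Taylor coefficients of nu o g: the l-th one for l < m span <nu(Z)>
   of the component Z = image of Spec F[u]/(u^m). *)
Definition sv_coef (g : germ) (l : nat) : SVidx -> F :=
  fun a => (\prod_(i < k) \prod_(t <- val (a i)) g i t)`_l.

(* Z = disjoint union of alpha connected curvilinear components Z_j
   (degree m j, germ g j), with distinct support points. *)
Definition curvilinear_scheme (alpha : nat) (m : 'I_alpha -> nat)
  (g : 'I_alpha -> germ) : Prop :=
  (forall j, curvilinear_component (m j) (g j)) /\
  (forall j1 j2, j1 != j2 -> exists i,
      ~ @proportional i (germ_pt (g j1) i) (germ_pt (g j2) i)).

Definition in_span_scheme (alpha : nat) (m : 'I_alpha -> nat)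
  (g : 'I_alpha -> germ) (p : SVidx -> F) : Prop :=
  exists c : 'I_alpha -> nat -> F,
    forall a, p a = \sum_(j < alpha) \sum_(l < m j) c j l * sv_coef (g j) l a.

End SV.

From HB Require Import structures.
From mathcomp Require Import all_boot all_algebra all_field.
From mathcomp Require Import zify ring.
Set Implicit Arguments. Unset Strict Implicit. Unset Printing Implicit Defensive.
Import GRing.Theory.
Local Open Scope ring_scope.

(** Fix a component: a germ [g] of a curve through its support and the
   coefficients [c_l], [l < m], of [p] on it.  Its contribution to [p] maps a
   monomial [a] to [L(P_a)], where [P_a(u)] is the monomial [a] evaluated along
   [g] (of degree at most [D(m-1)], [D = sum d_i], once [g] is truncated mod
   [u^m]) and [L(f) = sum_(l<m) c_l f_l] is the coefficient of [u^(m-1)] in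
   [C f], [C] being the reversal of [c].  If [C h = 1 mod u^m] then [L] kills
   [q h] for [deg q < m - 1].  For [h = C^-1 mod u^m - b u^M], with
   [M <= (D-1)(m-1) + 2] and [b] generic, [h] has [M] distinct roots [z_s] at
   which [g(z_s)] is a point of the product; reducing mod [h] and interpolating
   at the [z_s] gives [L(f) = sum_s w_s f(z_s)] whenever [deg f <= D(m-1)].  As
   [P_a(z) = sv (g(z)) a], the component has X-rank at most
   [M <= m(D-1) + 2].  For [D = 1] the embedding is linear and the rank is at
   most 1.  Summing over the components gives the bound. *)

Section XRank.
Variable F : fieldType.
Variables (k : nat) (n d : 'I_k -> nat).
Implicit Types p q : SVidx n d -> F.

Lemma eq_Xrank_le p q r : (forall a, p a = q a) -> Xrank_le p r -> Xrank_le q r.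
Proof.
move=> epq [s [hs [x [ok [w hw]]]]]; exists s; split=> //.
by exists x; split=> //; exists w => a; rewrite -epq.
Qed.

Lemma Xrank_le_trans p r r' : Xrank_le p r -> (r <= r')%N -> Xrank_le p r'.
Proof. by move=> [s [hs H]] hr; exists s; split=> //; apply: leq_trans hr. Qed.

Lemma Xrank_le0 p : (forall a, p a = 0) -> Xrank_le p 0.
Proof.
move=> p0; exists 0%N; split=> //; exists (fun _ _ _ => 0); split=> //.
by exists (fun _ => 0) => a; rewrite big_ord0 p0.
Qed.

Lemma Xrank_leD p q r1 r2 : Xrank_le p r1 -> Xrank_le q r2 ->
  Xrank_le (fun a => p a + q a) (r1 + r2).
Proof.
move=> [s1 [hs1 [x1 [ok1 [w1 e1]]]]] [s2 [hs2 [x2 [ok2 [w2 e2]]]]].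
exists (s1 + s2)%N; split; first exact: leq_add.
pose glue T (u v : nat -> T) l := if (l < s1)%N then u l else v (l - s1)%N.
exists (glue _ x1 x2); split.
  by move=> l hl; rewrite /glue; case: ltnP => hl1; [apply: ok1 | apply: ok2; lia].
exists (glue _ w1 w2) => a; rewrite big_split_ord e1 e2 /glue.
congr (_ + _); apply: eq_bigr => i _ /=; first by rewrite ltn_ord.
by rewrite ltnNge leq_addr addKn.
Qed.

Lemma Xrank_le_sum (I : Type) (r : seq I) (q : I -> SVidx n d -> F) (b : I -> nat) :
  (forall j, Xrank_le (q j) (b j)) ->
  Xrank_le (fun a => \sum_(j <- r) q j a) (\sum_(j <- r) b j).
Proof.
move=> hq; elim: r => [|j r IH].
  by rewrite big_nil; apply: Xrank_le0 => a; rewrite big_nil.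
rewrite big_cons; apply: eq_Xrank_le (Xrank_leD (hq j) IH) => a.
by rewrite big_cons.
Qed.

End XRank.

Section PolyComRing.
Variable R : comNzRingType.
Implicit Types p q f : {poly R}.

Lemma take_polyMl m p q : take_poly m (take_poly m p * q) = take_poly m (p * q).
Proof.
rewrite -{2}(poly_take_drop m p) mulrDl take_polyD mulrAC take_polyMXn_0.
by rewrite addr0.
Qed.

Lemma take_poly_prod (I : Type) (r : seq I) (P : I -> {poly R}) m :
  take_poly m (\prod_(x <- r) take_poly m (P x)) = take_poly m (\prod_(x <- r) P x).
Proof.
elim: r => [|x r IH]; first by rewrite !big_nil.
by rewrite !big_cons take_polyMl mulrC -[LHS]take_polyMl IH take_polyMl mulrC.
Qed.

Lemma size_prod_seq_leq (I : Type) (r : seq I) (P : I -> {poly R}) (w : I -> nat) e :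
  (forall x, size (P x) <= (w x * e).+1)%N ->
  (size (\prod_(x <- r) P x)%R <= ((\sum_(x <- r) w x) * e).+1)%N.
Proof.
move=> hP; elim: r => [|x r IH]; first by rewrite !big_nil size_poly1.
rewrite !big_cons mulnDl; apply: leq_trans (size_polyMleq _ _) _.
by have := hP x; lia.
Qed.

Lemma coef_mul_rev (c : nat -> R) f m : (0 < m)%N ->
  (\poly_(j < m) c (m.-1 - j)%N * f)`_m.-1 = \sum_(l < m) c l * f`_l.
Proof.
move=> m_gt0; rewrite coefM prednK // (reindex_inj rev_ord_inj) /=.
apply: eq_bigr => j _; have e : (m.-1 - (m - j.+1) = j)%N by have := ltn_ord j; lia.
by rewrite coef_poly e ifT //; have := ltn_ord j; lia.
Qed.

End PolyComRing.

Section Lagrange.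
Variable R : fieldType.
Variable rs : seq R.
Hypothesis rs_uniq : uniq rs.

Definition lagrange_poly (s : nat) : {poly R} :=
  \prod_(j < size rs | (j : nat) != s) ((rs`_s - rs`_j)^-1 *: ('X - (rs`_j)%:P)).

Lemma size_lagrange_poly (s : 'I_(size rs)) : (size (lagrange_poly s) <= size rs)%N.
Proof.
have cardP : #|[pred j : 'I_(size rs) | (j : nat) != s]| = (size rs).-1.
  by rewrite -[in RHS](card_ord (size rs)) -(cardC1 s); apply: eq_card => j; rewrite !inE.
apply: leq_trans (size_poly_prod_leq _ _) _; rewrite cardP.
apply: (@leq_trans ((\sum_(j < size rs | (j : nat) != s) 2).+1 - (size rs).-1)%N).
  rewrite leq_sub2r // ltnS leq_sum // => j _.
  by rewrite (leq_trans (size_scale_leq _ _)) ?size_XsubC.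
rewrite sum_nat_const cardP; have := ltn_ord s; lia.
Qed.

Lemma lagrange_poly_sample (s j : 'I_(size rs)) :
  (lagrange_poly s).[rs`_j] = (j == s)%:R.
Proof.
rewrite horner_prod; have [<-|njs] := eqVneq j s.
  apply: big1 => i ij; rewrite hornerZ hornerXsubC mulVf // subr_eq0.
  by rewrite nth_uniq // eq_sym.
by rewrite (bigD1 j) /= ?hornerZ ?hornerXsubC ?subrr ?mulr0 ?mul0r.
Qed.

Lemma lagrange_interpolation (p : {poly R}) : (size p <= size rs)%N ->
  p = \sum_(s < size rs) p.[rs`_s] *: lagrange_poly s.
Proof.
move=> sp; apply/eqP; rewrite -subr_eq0; apply/eqP.
apply: (roots_geq_poly_eq0 (rs := rs)) => //.
  apply/(all_nthP 0) => j hj; pose j' := Ordinal hj.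
  rewrite /root hornerD hornerN horner_sum.
  rewrite (bigD1 j') //= hornerZ (lagrange_poly_sample j' j') eqxx mulr1.
  rewrite big1 ?addr0 ?subrr //.
  by move=> s js; rewrite hornerZ (lagrange_poly_sample s j') eq_sym (negPf js) mulr0.
apply: leq_trans (size_polyD _ _) _; rewrite geq_max size_polyN sp.
apply: leq_trans (size_sum _ _ _) _; apply/bigmax_leqP => s _.
exact: leq_trans (size_scale_leq _ _) (size_lagrange_poly s).
Qed.

End Lagrange.

Section InverseModXn.
Variable R : fieldType.
Implicit Types C f h K q : {poly R}.

Lemma inverse_modXn C m : C`_0 != 0 ->
  exists A K, C * A = 1 + 'X^m * K /\ (size A <= m)%N.
Proof.
move=> C0; have cop : coprimep C 'X^m.
  by apply: coprimep_expr; rewrite -['X]subr0 coprimep_XsubC rootE horner_coef0.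
have [[u v] /= huv] := Bezout_eq1_coprimepP _ _ cop.
exists (u %% 'X^m), (- (v + C * (u %/ 'X^m))); split.
  have -> : u %% 'X^m = u - u %/ 'X^m * 'X^m by rewrite {2}(divp_eq u 'X^m) addrC addKr.
  by rewrite -[1 in RHS]huv; ring.
by rewrite -ltnS -(size_polyXn R m) ltn_modp -size_poly_eq0 size_polyXn.
Qed.

Lemma coef_mul_annihilated C h K q m : C * h = 1 + 'X^m * K ->
  (size q <= m.-1)%N -> (C * (q * h))`_m.-1 = 0.
Proof.
move=> hCh sq; rewrite mulrCA hCh mulrDr mulr1 coefD mulrCA coefXnM.
case: m {hCh} sq => [|m] sq /=; last by rewrite ltnSn addr0 nth_default.
by move/size_poly_leq0P: sq => ->; rewrite mul0r !coef0 addr0.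
Qed.

Lemma coef_mul_modp C h K f m : C * h = 1 + 'X^m * K -> h != 0 ->
  (size f <= (size h).-1 + m.-1)%N -> (C * f)`_m.-1 = (C * (f %% h))`_m.-1.
Proof.
move=> hCh h0 sf; rewrite {1}(divp_eq f h) mulrDr coefD.
by rewrite (coef_mul_annihilated hCh) ?add0r // size_divp // leq_subLR.
Qed.

End InverseModXn.

Section ClosedField.
Variable F : closedFieldType.

Lemma exists_roots_seq (p : {poly F}) : p != 0 ->
  exists rs : seq F, forall z, root p z = (z \in rs).
Proof.
move=> p0; have [rs hrs] := closed_field_poly_normal p; exists rs => z.
by rewrite {1}hrs rootZ ?lead_coef_eq0 // root_prod_XsubC.
Qed.

Lemma exists_nonzero_notin (S : seq F) : exists2 b, b != 0 & b \notin S.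
Proof.
have hnz : 'X * \prod_(s <- S) ('X - s%:P) != 0 :> {poly F}.
  by rewrite mulf_neq0 ?polyX_eq0 // monic_neq0 // monic_prod_XsubC.
have [b] := closed_nonrootP _ hnz.
by rewrite rootM root_prod_XsubC rootX negb_or => /andP[]; exists b.
Qed.

Lemma separable_roots (h : {poly F}) : separable_poly h ->
  exists rs : seq F,
    [/\ size rs = (size h).-1, uniq rs & forall z, root h z = (z \in rs)].
Proof.
move=> sep_h; have h0 := separable_poly_neq0 sep_h.
have [rs hrs] := closed_field_poly_normal h.
have lc0 : lead_coef h != 0 by rewrite lead_coef_eq0.
exists rs; split.
- by rewrite {1}hrs size_scale // size_prod_XsubC.
- by rewrite -separable_prod_XsubC -(eqp_separable (eqp_scale _ lc0)) -hrs.
- by move=> z; rewrite {1}hrs rootZ // root_prod_XsubC.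
Qed.

(* A common root of [h] and [h'] is a root of [X A' - M A], which is nonzero at
   [0] only when [M] is nonzero in [F]. *)
Lemma exists_separable_perturbation (A Gam : {poly F}) (M : nat) :
  A`_0 != 0 -> Gam != 0 -> M%:R != 0 :> F -> (size A <= M)%N ->
  exists b : F, [/\ size (A - b *: 'X^M) = M.+1, separable_poly (A - b *: 'X^M)
    & forall z, root (A - b *: 'X^M) z -> Gam.[z] != 0].
Proof.
move=> A0 Gam0 M0 sA; have M_gt0 : (0 < M)%N.
  by apply: leq_trans sA; rewrite size_poly_gt0; apply: contraNneq A0 => ->; rewrite coef0.
pose G := 'X * A^`() - M%:R *: A.
have G0 : G != 0.
  apply: contraNneq (mulf_neq0 M0 A0) => eG; have := congr1 (fun p : {poly F} => p`_0) eG.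
  by rewrite /= coefB coefXM coefZ coef0 sub0r => /eqP; rewrite oppr_eq0.
have [rs hrs] := exists_roots_seq (mulf_neq0 G0 Gam0).
have [b b0 hb] := exists_nonzero_notin [seq A.[z] / z ^+ M | z <- rs].
set h := A - b *: 'X^M.
have hAz z : root h z -> A.[z] = b * z ^+ M.
  by rewrite rootE !hornerE subr_eq0 => /eqP.
have good z : root h z -> ~~ root (G * Gam) z.
  move=> hz; apply: contra hb; rewrite hrs => zrs; apply/mapP; exists z => //.
  have z0 : z != 0.
    apply: contraTneq hz => ->; rewrite rootE !hornerE expr0n gtn_eqF //.
    by rewrite mulr0 subr0 horner_coef0.
  by rewrite hAz // mulfK // expf_neq0.
exists b; split.
- rewrite addrC size_polyDl size_polyN size_scale // size_polyXn //.
- rewrite unlock; apply: Pdiv.ClosedField.root_coprimep => z hz.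
  apply: contra (good z hz) => /eqP h'z; rewrite rootM; apply/orP; left.
  move: h'z; rewrite derivB derivZ derivXn !hornerE.
  rewrite rootE /G !hornerE hAz // => /eqP; rewrite subr_eq0 => /eqP ->.
  have -> : z ^+ M = z * z ^+ M.-1 by rewrite -exprS prednK.
  by rewrite hornerMn hornerXn -mulr_natl; apply/eqP; ring.
- by move=> z /good; rewrite rootM negb_or => /andP[_]; rewrite rootE.
Qed.

Lemma coef_mul_as_evaluations (C Gam : {poly F}) (m M N : nat) :
  C`_0 != 0 -> Gam != 0 -> M%:R != 0 :> F -> (0 < m <= M)%N -> (N < M + m.-1)%N ->
  exists rs : seq F, exists w : nat -> F,
    [/\ size rs = M, forall z, z \in rs -> Gam.[z] != 0 &
        forall f : {poly F}, (size f <= N.+1)%N ->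
          (C * f)`_m.-1 = \sum_(s < M) f.[rs`_s] * w s].
Proof.
move=> C0 Gam0 M0 /andP[m_gt0 mM] NM.
have [A [K [hCA sA]]] := inverse_modXn m C0.
have A0 : A`_0 != 0.
  have := congr1 (fun p : {poly F} => p`_0) hCA.
  rewrite /= coef0M coefD coef1 coefXnM m_gt0 addr0 => e.
  by apply/eqP => A0; move: e; rewrite A0 mulr0 => /eqP; rewrite eq_sym oner_eq0.
have [b [sh sep_h hGam]] := exists_separable_perturbation A0 Gam0 M0 (leq_trans sA mM).
set h := A - b *: 'X^M in sh sep_h hGam.
have [rs [srs urs hrs]] := separable_roots sep_h; rewrite sh /= in srs.
have hCh : C * h = 1 + 'X^m * (K - b *: (C * 'X^(M - m))).
  have eXM : 'X^M = 'X^m * 'X^(M - m) :> {poly F} by rewrite -exprD subnKC.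
  by rewrite /h mulrBr hCA eXM -!mul_polyC; ring.
have h0 : h != 0 by rewrite -size_poly_eq0 sh.
exists rs, (fun s => (C * lagrange_poly rs s)`_m.-1); split=> //.
  by move=> z; rewrite -hrs; apply: hGam.
move=> f sf; rewrite (coef_mul_modp hCh h0); last first.
  by rewrite sh; apply: leq_trans sf _; lia.
have smod : (size (f %% h)%R <= size rs)%N by rewrite srs -ltnS -sh ltn_modp.
rewrite {1}(lagrange_interpolation urs smod) mulr_sumr coef_sum srs.
apply: eq_bigr => s _; rewrite -scalerAr coefZ; congr (_ * _).
have : root h rs`_s by rewrite hrs mem_nth // srs.
by rewrite {2}(divp_eq f h) rootE !hornerE => /eqP ->; rewrite mulr0 add0r.
Qed.

End ClosedField.

Lemma exists_natr_neq0 (R : nzRingType) M0 :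
  exists2 M, (M0 <= M <= M0.+1)%N & M%:R != 0 :> R.
Proof.
have [M00|M00] := eqVneq (M0%:R : R) 0; last by exists M0; rewrite ?leqnn ?leqnSn.
by exists M0.+1; rewrite ?leqnSn ?leqnn // mulrSr M00 add0r oner_neq0.
Qed.

Section SegreVeronese.
Variable F : closedFieldType.
Variables (k : nat) (n d : 'I_k -> nat).
Hypothesis d_gt0 : forall i, (0 < d i)%N.
Local Notation D := (\sum_(i < k) d i)%N.

Definition germ_poly (g : germ F n) (a : SVidx n d) : {poly F} :=
  \prod_(i < k) \prod_(t <- val (a i)) g i t.

Definition germ_trunc (m : nat) (g : germ F n) : germ F n :=
  fun i t => take_poly m (g i t).
Arguments germ_trunc m g i t : clear implicits.

Definition germ_eval (g : germ F n) (z : F) : ppoint F n :=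
  fun i t => (g i t).[z].
Arguments germ_eval g z i t : clear implicits.

Lemma sv_germ_eval g z a : sv (germ_eval g z) a = (germ_poly g a).[z].
Proof.
by rewrite /sv /germ_poly horner_prod; apply: eq_bigr => i _; rewrite horner_prod.
Qed.

Lemma coef_germ_poly_trunc g m l a : (l < m)%N ->
  (germ_poly (germ_trunc m g) a)`_l = sv_coef g l a.
Proof.
move=> lm.
have E : take_poly m (germ_poly (germ_trunc m g) a) = take_poly m (germ_poly g a).
  rewrite -[LHS]take_poly_prod -[RHS]take_poly_prod; congr take_poly.
  by apply: eq_bigr => i _; apply: take_poly_prod.
by have := congr1 (fun p : {poly F} => p`_l) E; rewrite /= !coef_take_poly lm.
Qed.

Lemma size_germ_poly_trunc g m a :
  (size (germ_poly (germ_trunc m g) a) <= (D * m.-1).+1)%N.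
Proof.
apply: size_prod_seq_leq => i.
have := @size_prod_seq_leq _ _ (val (a i)) (germ_trunc m g i) (fun=> 1%N) m.-1.
rewrite sum1_size size_tuple; apply=> t; rewrite mul1n.
by apply: leq_trans (size_take_poly _ _) _; case: m.
Qed.

Lemma germ_eval_ok g : ppoint_ok (germ_pt g) ->
  exists2 Gam : {poly F}, Gam != 0 & forall z, Gam.[z] != 0 -> ppoint_ok (germ_eval g z).
Proof.
move=> /fin_all_exists[t ht]; exists (\prod_i g i (t i)).
  by apply/prodf_neq0 => i _; apply: contraNneq (ht i) => gi0; rewrite /germ_pt gi0 coef0.
by move=> z; rewrite horner_prod => /prodf_neq0 hz i; exists (t i); apply: hz.
Qed.

Lemma Xrank_le_sv (y : ppoint F n) : Xrank_le (@sv F k n d y) 1.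
Proof.
have [ok|/forallPn[i /existsPn y0]] := boolP [forall i, exists t, y i t != 0].
  exists 1%N; split=> //; exists (fun=> y); split.
    by move=> _ _ i; apply/existsP; apply: (forallP ok).
  by exists (fun=> 1) => a; rewrite big_ord1 mul1r.
apply: Xrank_le_trans (Xrank_le0 _) _ => // a; apply/eqP.
rewrite prodf_seq_eq0; apply/hasP; exists i => //; rewrite prodf_seq_eq0.
apply/hasP; exists (nth ord0 (val (a i)) 0); first by rewrite mem_nth // size_tuple.
by rewrite (negPn (y0 _)).
Qed.

Lemma sv_coef_deg1 g m (c : nat -> F) (a : SVidx n d) : D = 1%N ->
  \sum_(l < m) c l * sv_coef g l a = sv (fun i t => \sum_(l < m) c l * (g i t)`_l) a.
Proof.
move=> D1; have k_le1 : (k <= 1)%N.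
  by rewrite -D1 -[X in (X <= _)%N]card_ord -sum1_card leq_sum.
have [i0 _|none] := pickP (@predT 'I_k); last by move: D1; rewrite big_pred0.
have all_i0 (j : 'I_k) : j = i0.
  by apply: val_inj => /=; have := ltn_ord j; have := ltn_ord i0; lia.
have [t0 at0] : exists t0, tval (val (a i0)) = [:: t0].
  have : d i0 = D by rewrite (big_pred1 i0) // => j /=; rewrite [j]all_i0 eqxx.
  rewrite D1 => di0; have : size (tval (val (a i0))) = 1%N by rewrite size_tuple.
  by case: (tval _) => [|t0 [|]] // _; exists t0.
have collapse (R : comNzRingType) (f : forall i, 'I_(n i).+1 -> R) :
    \prod_(i < k) \prod_(t <- val (a i)) f i t = f i0 t0.
  by rewrite (big_pred1 i0) ?at0 ?big_seq1 // => j /=; rewrite [j]all_i0 eqxx.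
by rewrite /sv collapse; apply: eq_bigr => l _; rewrite /sv_coef collapse.
Qed.

Lemma Xrank_le_component_nondeg g m (c : nat -> F) :
  (2 <= D)%N -> ppoint_ok (germ_pt g) -> (0 < m)%N -> c m.-1 != 0 ->
  Xrank_le (fun a : SVidx n d => \sum_(l < m) c l * sv_coef g l a) (m * (D - 1) + 2).
Proof.
move=> D2 ok m_gt0 cm.
set gam := germ_trunc m g; pose C := \poly_(j < m) c (m.-1 - j)%N.
have C0 : C`_0 != 0 by rewrite coef_poly m_gt0 subn0.
have ok_gam : ppoint_ok (germ_pt gam).
  by move=> i; have [t ht] := ok i; exists t; rewrite /germ_pt coef_take_poly m_gt0.
have [Gam Gam0 hGam] := germ_eval_ok ok_gam.
have [M /andP[M_ge M_le] M0] := exists_natr_neq0 F ((D - 1) * m.-1).+1.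
have mM : (0 < m <= M)%N by rewrite m_gt0 /=; apply: leq_trans M_ge; nia.
have NM : (D * m.-1 < M + m.-1)%N by nia.
have [rs [w [srs rsGam hw]]] := coef_mul_as_evaluations C0 Gam0 M0 mM NM.
exists M; split; first by nia.
exists (fun s => germ_eval gam rs`_s); split.
  by move=> s hs; apply: hGam; apply: rsGam; rewrite mem_nth ?srs.
exists w => a; transitivity (C * germ_poly gam a)`_m.-1.
  by rewrite coef_mul_rev //; apply: eq_bigr => l _; rewrite coef_germ_poly_trunc.
by rewrite hw ?size_germ_poly_trunc //; apply: eq_bigr => s _; rewrite sv_germ_eval mulrC.
Qed.

Lemma Xrank_le_component g m (c : nat -> F) : (0 < D)%N -> ppoint_ok (germ_pt g) ->
  Xrank_le (fun a : SVidx n d => \sum_(l < m) c l * sv_coef g l a) (m * (D - 1) + 2).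
Proof.
move=> D_gt0 ok; have [D1|D_neq1] := eqVneq D 1%N.
  apply: Xrank_le_trans (eq_Xrank_le _ (Xrank_le_sv _)) _; last by lia.
  by move=> a; rewrite sv_coef_deg1.
have D2 : (2 <= D)%N by lia.
elim: m => [|m IH].
  by apply: Xrank_le_trans (Xrank_le0 _) _ => // a; rewrite big_ord0.
have [cm0|cm] := eqVneq (c m) 0; last exact: Xrank_le_component_nondeg.
apply: eq_Xrank_le (Xrank_le_trans IH _) => [a|]; last by nia.
by rewrite big_ord_recr /= cm0 mul0r addr0.
Qed.

End SegreVeronese.

Unset Implicit Arguments.
Theorem theorem3 (F : closedFieldType) (k : nat) (n d : 'I_k -> nat)
  (hk : (0 < k)%N) (hd : forall i, (0 < d i)%N)
  (p : SVidx n d -> F) (hp : exists a, p a != 0)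
  (alpha : nat) (m : 'I_alpha -> nat) (g : 'I_alpha -> germ F n)
  (c : nat) (hc : c = (\sum_(j < alpha) m j)%N)
  (hZ : curvilinear_scheme m g)
  (hpZ : in_span_scheme m g p)
  (hind : forall j : 'I_alpha, lin_indep (m j) (@sv_coef F k n d (g j))) :
  Xrank_le p (2 * alpha + c * ((\sum_(i < k) d i) - 1))%N.
Proof.
have D_gt0 : (0 < \sum_(i < k) d i)%N.
  by rewrite (bigD1 (Ordinal hk)) //= addn_gt0 hd.
case: hZ => ok _; case: hpZ => w hpw.
have comp j : Xrank_le (fun a : SVidx n d => \sum_(l < m j) w j l * sv_coef (g j) l a)
    (m j * (\sum_(i < k) d i - 1) + 2)%N.
  by have [_ gj_ok _] := ok j; apply: Xrank_le_component.
apply: Xrank_le_trans (eq_Xrank_le (fun a => esym (hpw a)) (Xrank_le_sum _ comp)) _.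
by rewrite hc big_split /= -big_distrl sum_nat_const card_ord addnC mulnC.
Qed.
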